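(* Let $L''$ be the Latin square of order $6$ $$L''=\begin{pmatrix} a&b&c&d&e&f\\ b&c&a&e&f&d\\ c&a&b&f&d&e\\ d&e&f&a&c&b\\ e&f&d&c&b&a\\ f&d&e&b&a&c \end{pmatrix}.$$ Let $L$ be any array obtained from $L''$ by replacing an arbitrary subset (possibly empty) of the occurrences of the symbol $d$ by a new symbol $g$. Then $L$ has no transversal.
   Context: An entry of an $n\times n$ array $A$ is a triple $(i,j,A_{ij})$. A transversal of an $n\times n$ array is a set of $n$ entries, no two agreeing in row, column, or symbol. Here $a,b,c,d,e,f,g$ are seven distinct symbols. *)

From HB Require Import structures.
From mathcomp Require Import all_boot.
Set Implicit Arguments. Unset Strict Implicit. Unset Printing Implicit Defensive.

Inductive sym := sa | sb | sc | sd | se | sf | sg.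

Definition sym_to_nat (s : sym) : nat :=
  match s with sa => 0 | sb => 1 | sc => 2 | sd => 3 | se => 4 | sf => 5 | sg => 6 end.
Definition nat_to_sym (n : nat) : sym :=
  match n with 0 => sa | 1 => sb | 2 => sc | 3 => sd | 4 => se | 5 => sf | _ => sg end.
Lemma sym_to_natK : cancel sym_to_nat nat_to_sym. Proof. by case. Qed.
HB.instance Definition _ := Equality.copy sym (can_type sym_to_natK).
HB.instance Definition _ := Countable.copy sym (can_type sym_to_natK).
Definition sym_enum := [:: sa; sb; sc; sd; se; sf; sg].
Lemma sym_enumP : Finite.axiom sym_enum. Proof. by case. Qed.
HB.instance Definition _ := isFinite.Build sym sym_enumP.

Definition array (n : nat) := 'I_n -> 'I_n -> sym.

Definition Lpp_rows : seq (seq sym) :=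
  [:: [:: sa; sb; sc; sd; se; sf];
      [:: sb; sc; sa; se; sf; sd];
      [:: sc; sa; sb; sf; sd; se];
      [:: sd; se; sf; sa; sc; sb];
      [:: se; sf; sd; sc; sb; sa];
      [:: sf; sd; se; sb; sa; sc]].

Definition Lpp : array 6 := fun i j => nth sa (nth [::] Lpp_rows i) j.

Definition replace_d (S : {set 'I_6 * 'I_6}) : array 6 :=
  fun i j => if (Lpp i j == sd) && ((i, j) \in S) then sg else Lpp i j.

Definition is_transversal_arr {n : nat} (A : array n) (T : {set 'I_n * 'I_n}) : Prop :=
  #|T| = n /\
  {in T &, forall x y, x != y ->
     [/\ x.1 != y.1, x.2 != y.2 & A x.1 x.2 != A y.1 y.2]}.

(** The cells of a transversal of [L] form the graph of a permutation [s]
    along which [L] carries pairwise distinct symbols.  Since only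
    [d] is split into [d] and [g], the cells of [L''] along [s] would then
    carry pairwise distinct symbols other than [d], and [d] at most twice.  A
    check of the [6! = 720] permutations shows that no permutation of [L'']
    has this property. *)

From mathcomp Require Import all_boot all_fingroup.

Definition rainbow_up_to_d (w : seq sym) : bool :=
  uniq (filter (predC1 sd) w) && (count_mem sd w <= 2).

Section Recolouring.

Variables (I : finType) (f g : I -> sym).
Hypothesis g_eq_f : forall i, f i != sd -> g i = f i.
Hypothesis g_dg : forall i, f i = sd -> g i \in [:: sd; sg].

Lemma rainbow_up_to_d_recolouring :
  injective g -> rainbow_up_to_d [seq f i | i <- enum I].
Proof.
move=> g_inj; apply/andP; split.
  rewrite filter_map map_inj_in_uniq; first exact/filter_uniq/enum_uniq.
  move=> i j; rewrite !mem_filter => /andP [fi _] /andP [fj _] fij.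
  by apply: g_inj; rewrite !g_eq_f.
rewrite count_map -size_filter -(size_map g).
apply: (@uniq_leq_size _ _ [:: sd; sg]).
  by rewrite (map_inj_uniq g_inj); exact/filter_uniq/enum_uniq.
move=> y /mapP [i]; rewrite mem_filter => /andP [/eqP /g_dg + _] ->.
by rewrite !inE.
Qed.

End Recolouring.

Lemma transversal_perm (n : nat) (A : array n) (T : {set 'I_n * 'I_n}) :
  is_transversal_arr A T ->
  exists s : {perm 'I_n}, injective (fun i => A i (s i)).
Proof.
move=> [cardT distinctT].
have row_inj : {in T &, injective (fun x : 'I_n * 'I_n => x.1)}.
  move=> x y xT yT; apply: contra_eq => /(distinctT x y xT yT).
  by case.
have rows_T : forall i : 'I_n, exists2 x, x \in T & x.1 = i.
  move=> i; have : i \in [set x.1 | x in T].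
    suff -> : [set x.1 | x in T] = setT by rewrite inE.
    apply/eqP; rewrite eqEcard subsetT cardsT card_ord.
    by rewrite card_in_imset // cardT leqnn.
  by case/imsetP=> x xT ->; exists x.
pose cell i := odflt (i, i) [pick x in T | x.1 == i].
have cellP i : cell i \in T /\ (cell i).1 = i.
  rewrite /cell; case: pickP => [x /andP [xT /eqP ->] //|none].
  by have [x xT xi] := rows_T i; move: (none x); rewrite xT xi eqxx.
have cell_neq i j : i != j -> cell i != cell j.
  by apply: contraNneq => eq_cell; rewrite -(cellP i).2 -(cellP j).2 eq_cell.
have col_inj : injective (fun i => (cell i).2).
  move=> i j; apply: contra_eq => /cell_neq.
  by have [iT _] := cellP i; have [jT _] := cellP j; case/distinctT.
exists (perm col_inj) => i j; rewrite !permE; apply: contra_eq => /cell_neq.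
have [iT {2}<-] := cellP i; have [jT {2}<-] := cellP j.
by case/distinctT.
Qed.

(* [L''] read along the permutation [i |-> nth 0 p i] of [iota 0 6]; stated on
   [nat] so that the 720 cases can be enumerated by [vm_compute]. *)
Definition Lpp_diag (p : seq nat) : seq sym :=
  [seq nth sa (nth [::] Lpp_rows i) (nth 0 p i) | i <- iota 0 6].

Lemma Lpp_diag_not_rainbow_up_to_d :
  all (fun p => ~~ rainbow_up_to_d (Lpp_diag p)) (permutations (iota 0 6)).
Proof. by vm_compute. Qed.

Lemma Lpp_perm_not_rainbow_up_to_d (s : {perm 'I_6}) :
  ~~ rainbow_up_to_d [seq Lpp i (s i) | i <- enum 'I_6].
Proof.
pose p := map val (map s (enum 'I_6)).
have p_perm : perm_eq p (iota 0 6).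
  rewrite /p -val_enum_ord; apply: perm_map.
  apply: uniq_perm; rewrite ?(map_inj_uniq perm_inj) ?enum_uniq // => i.
  rewrite mem_enum; apply/mapP.
  by exists ((s^-1)%g i); rewrite ?mem_enum ?permKV.
have -> : [seq Lpp i (s i) | i <- enum 'I_6] = Lpp_diag p.
  rewrite /Lpp_diag -val_enum_ord -map_comp; apply: eq_map => i /=.
  rewrite (nth_map ord0) ?size_map -?enumT ?size_enum_ord //.
  by rewrite (nth_map ord0) ?nth_ord_enum // -cardT card_ord.
have p_mem : p \in permutations (iota 0 6) by rewrite mem_permutations.
exact: (allP Lpp_diag_not_rainbow_up_to_d).
Qed.

Theorem mainTheorem15 (S : {set 'I_6 * 'I_6}) :
  ~ exists T : {set 'I_6 * 'I_6}, is_transversal_arr (replace_d S) T.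
Proof.
move=> [T /transversal_perm [s rainbow]].
have /negP := Lpp_perm_not_rainbow_up_to_d s; apply.
apply: (@rainbow_up_to_d_recolouring _ _ _ _ _ rainbow).
  by move=> i /negbTE; rewrite /replace_d => ->.
by move=> i; rewrite /replace_d => ->; case: (_ \in S); rewrite !inE eqxx ?orbT.
Qed.
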